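(* Let $n\ge2$ be an integer. Then there is a bijection between the sets $\Sigma_{n^2}$ and $\Pi_n$.
   Context: $\Sigma_{n^2}$ is the set of all $n^2\times n^2$ permutation matrices (binary matrices with exactly one 1 in every row and every column) which, when partitioned into an $n\times n$ array of $n\times n$ blocks, have exactly one entry equal to 1 in each block. $\Pi_n$ is the set of all $n\times n$ matrices whose entries are ordered pairs $\langle a,b\rangle$ with $a,b\in\{1,\dots,n\}$ such that in every row the first components of the entries, read in order, form a permutation of $\{1,\dots,n\}$, and in every column the second components of the entries, read in order, form a permutation of $\{1,\dots,n\}$. *)

From mathcomp Require Import all_boot all_algebra.
Set Implicit Arguments. Unset Strict Implicit. Unset Printing Implicit Defensive.

(* Row/column indices of an n^2 x n^2 matrix are 'I_(n*n) (0-based);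
   the entry (i, j) lies in block (i %/ n, j %/ n) of the n x n array of
   n x n blocks. *)

Definition is_perm_matrix (m : nat) (A : 'M[bool]_m) : bool :=
  [forall i, #|[set j | A i j]| == 1] && [forall j, #|[set i | A i j]| == 1].

Definition in_Sigma (n : nat) (A : 'M[bool]_(n * n)) : bool :=
  is_perm_matrix A &&
  [forall a : 'I_n, forall b : 'I_n,
     #|[set p : 'I_(n * n) * 'I_(n * n) |
          [&& A p.1 p.2, p.1 %/ n == a & p.2 %/ n == b]]| == 1].

(* Pi_n: n x n matrices of ordered pairs <a,b> with a, b in {0,..,n-1}
   (0-based version of {1,..,n}); in each row the first components read in
   order form a permutation, in each column the second components read in
   order form a permutation. *)
Definition in_Pi (n : nat) (M : 'M[('I_n * 'I_n)%type]_n) : bool :=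
  [forall i, perm_eq [seq (M i j).1 | j <- enum 'I_n] (enum 'I_n)] &&
  [forall j, perm_eq [seq (M i j).2 | i <- enum 'I_n] (enum 'I_n)].

From mathcomp Require Import all_boot all_algebra.
From mathcomp Require Import zify.

Set Implicit Arguments.
Unset Strict Implicit.
Unset Printing Implicit Defensive.

(* Cut the n^2 x n^2 matrix A into its n x n blocks; since A has a single 1
   in block (a, b), record in entry (a, b) of an n x n matrix M the position
   <c, d> of that 1 inside the block.  A row of A is a row c of a row of
   blocks a, and it contains exactly one 1 iff c occurs exactly once among
   the first components of row a of M; columns are symmetric, with second
   components. *)

Lemma card_set_eq1P (T : finType) (P : pred T) :
  reflect (exists x, forall y, P y = (y == x)) (#|[set y | P y]| == 1).
Proof.
apply: (iffP cards1P) => [[x /setP Px]|[x Px]]; exists x.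
  by move=> y; have := Px y; rewrite !inE.
by apply/setP => y; rewrite !inE Px.
Qed.

Lemma eq_pair_flip (T : eqType) (p : T * T) x y :
  ((p.2, p.1) == (y, x)) = (p == (x, y)).
Proof. by case: p => u v; rewrite !xpair_eqE andbC. Qed.

Lemma perm_map_enumP (T : finType) (F : T -> T) :
  perm_eq [seq F x | x <- enum T] (enum T) <-> injective F.
Proof.
split=> [/perm_uniq|F_inj].
  by rewrite enum_uniq => /injectiveP.
apply: uniq_perm; rewrite ?(map_inj_uniq F_inj) ?enum_uniq // => y.
have [G _ GK] := injF_bij F_inj.
by rewrite mem_enum; apply/mapP; exists (G y); rewrite ?mem_enum ?GK.
Qed.

Section PermMatrix.
Variables (m : nat) (A : 'M[bool]_m).
Hypothesis A_perm : is_perm_matrix A.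

Lemma perm_matrix_row_uniq i j j' : A i j -> A i j' -> j = j'.
Proof.
case/andP: A_perm => /forallP/(_ i)/card_set_eq1P[x Ax] _.
by rewrite !Ax => /eqP-> /eqP->.
Qed.

Lemma perm_matrix_col_uniq i i' j : A i j -> A i' j -> i = i'.
Proof.
case/andP: A_perm => _ /forallP/(_ j)/card_set_eq1P[x Ax].
by rewrite !Ax => /eqP-> /eqP->.
Qed.

End PermMatrix.

Section Blocks.
Variable k : nat.
Local Notation n := k.+1.

Lemma bidx_subproof (a c : 'I_n) : a * n + c < n * n.
Proof. by have := ltn_ord a; have := ltn_ord c; nia. Qed.

Definition bidx (a c : 'I_n) : 'I_(n * n) := Ordinal (bidx_subproof a c).

Lemma bblk_subproof (i : 'I_(n * n)) : i %/ n < n.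
Proof. by rewrite ltn_divLR. Qed.

Definition bblk (i : 'I_(n * n)) : 'I_n := Ordinal (bblk_subproof i).
Definition boff (i : 'I_(n * n)) : 'I_n := Ordinal (ltn_pmod i (ltn0Sn k)).

Lemma bidx_div a c : bidx a c %/ n = a.
Proof. by rewrite /= divnMDl // divn_small // addn0. Qed.

Lemma bblk_bidx a c : bblk (bidx a c) = a.
Proof. by apply/val_inj; rewrite /= bidx_div. Qed.

Lemma boff_bidx a c : boff (bidx a c) = c.
Proof. by apply/val_inj; rewrite /= modnMDl modn_small. Qed.

Lemma bidx_blk_off i : bidx (bblk i) (boff i) = i.
Proof. by apply/val_inj; rewrite /= -divn_eq. Qed.

Lemma eq_bidx a c a' c' : (bidx a c == bidx a' c') = (a == a') && (c == c').
Proof.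
apply/idP/idP => [/eqP e|/andP[/eqP-> /eqP->]] //.
have /eqP := congr1 bblk e; have /eqP := congr1 boff e.
by rewrite !bblk_bidx !boff_bidx => -> ->.
Qed.

Lemma bidx_blk {a : 'I_n} {i : 'I_(n * n)} : i %/ n = a -> i = bidx a (boff i).
Proof. by move=> ia; apply/val_inj; rewrite /= -ia -divn_eq. Qed.

Definition blocks_of (A : 'M[bool]_(n * n)) : 'M[('I_n * 'I_n)%type]_n :=
  \matrix_(a, b)
    odflt (ord0, ord0) [pick q : 'I_n * 'I_n | A (bidx a q.1) (bidx b q.2)].

Definition mx_of_blocks (M : 'M[('I_n * 'I_n)%type]_n) : 'M[bool]_(n * n) :=
  \matrix_(i, j) (M (bblk i) (bblk j) == (boff i, boff j)).

Lemma mx_of_blocksE M a b c d :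
  mx_of_blocks M (bidx a c) (bidx b d) = (M a b == (c, d)).
Proof. by rewrite mxE !bblk_bidx !boff_bidx. Qed.

Lemma mx_of_blocksK : cancel mx_of_blocks blocks_of.
Proof.
move=> M; apply/matrixP => a b; rewrite mxE.
case: pickP => [q|no_q] /=.
  by rewrite mx_of_blocksE -surjective_pairing => /eqP->.
by have := no_q (M a b); rewrite /= mx_of_blocksE -surjective_pairing eqxx.
Qed.

Section FromSigma.
Variable A : 'M[bool]_(n * n).
Hypothesis A_Sigma : in_Sigma A.

Lemma Sigma_block_unique a b :
  exists q, forall q', A (bidx a q'.1) (bidx b q'.2) = (q' == q).
Proof.
case/andP: A_Sigma => _ /forallP/(_ a)/forallP/(_ b)/card_set_eq1P[[i j] Aij].
have /and3P[_ /eqP ia /eqP jb] : [&& A i j, i %/ n == a & j %/ n == b].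
  by rewrite (Aij (i, j)).
exists (boff i, boff j) => -[c d] /=.
have := Aij (bidx a c, bidx b d); rewrite /= !bidx_div !eqxx !andbT => ->.
by rewrite (bidx_blk ia) (bidx_blk jb) !xpair_eqE !eq_bidx !boff_bidx !eqxx.
Qed.

Lemma blocks_ofE a b q : A (bidx a q.1) (bidx b q.2) = (q == blocks_of A a b).
Proof.
have [q0 Aq0] := Sigma_block_unique a b.
rewrite mxE; case: pickP => [q' |no_q] /=; first by rewrite Aq0 => /eqP->.
by have := no_q q0; rewrite Aq0 eqxx.
Qed.

Lemma A_blocks_of a b : A (bidx a (blocks_of A a b).1) (bidx b (blocks_of A a b).2).
Proof. by rewrite blocks_ofE. Qed.

Lemma blocks_ofK : mx_of_blocks (blocks_of A) = A.
Proof.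
apply/matrixP => i j; rewrite mxE eq_sym.
by have := blocks_ofE (bblk i) (bblk j) (boff i, boff j); rewrite !bidx_blk_off.
Qed.

Lemma blocks_of_Pi : in_Pi (blocks_of A).
Proof.
case/andP: A_Sigma => A_perm _.
apply/andP; split; apply/forallP => x; apply/perm_map_enumP.
  move=> b b' eq_fst; have Ab' := A_blocks_of x b'; rewrite -eq_fst in Ab'.
  have := congr1 bblk (perm_matrix_row_uniq A_perm (A_blocks_of x b) Ab').
  by rewrite !bblk_bidx.
move=> a a' eq_snd; have Aa' := A_blocks_of a' x; rewrite -eq_snd in Aa'.
have := congr1 bblk (perm_matrix_col_uniq A_perm (A_blocks_of a x) Aa').
by rewrite !bblk_bidx.
Qed.

End FromSigma.

Lemma unique_fst_in_row (F : 'I_n -> 'I_n * 'I_n) (c : 'I_n) :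
    injective (fun b => (F b).1) ->
  exists j, forall j' : 'I_(n * n), (F (bblk j') == (c, boff j')) = (j' == j).
Proof.
move=> F1_inj; have [G _ GK] := injF_bij F1_inj.
have F1G : (F (G c)).1 = c by rewrite GK.
exists (bidx (G c) (F (G c)).2) => j'; rewrite -(bidx_blk_off j').
move: (bblk j') (boff j') => b d; rewrite bblk_bidx boff_bidx eq_bidx.
apply/eqP/andP => [Fb|[/eqP-> /eqP->]]; last by case: (F (G c)) F1G => u v /= ->.
have eq_b : b = G c by apply: F1_inj; rewrite /= Fb F1G.
by rewrite eq_b -eq_b Fb !eqxx.
Qed.

Section FromPi.
Variable M : 'M[('I_n * 'I_n)%type]_n.
Hypothesis M_Pi : in_Pi M.

Lemma mx_of_blocks_perm : is_perm_matrix (mx_of_blocks M).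
Proof.
case/andP: M_Pi => /forallP M_rows /forallP M_cols.
apply/andP; split; apply/forallP => x; apply/card_set_eq1P.
  have /perm_map_enumP F1_inj := M_rows (bblk x).
  have [j Mj] := unique_fst_in_row (boff x) F1_inj.
  by exists j => j'; rewrite mxE.
have /perm_map_enumP F2_inj := M_cols (bblk x).
have [i Mi] := unique_fst_in_row (F := fun a => ((M a (bblk x)).2, (M a (bblk x)).1)) (boff x) F2_inj.
by exists i => i'; rewrite mxE -eq_pair_flip.
Qed.

Lemma mx_of_blocks_block (a b : 'I_n) :
  #|[set p : 'I_(n * n) * 'I_(n * n) |
       [&& mx_of_blocks M p.1 p.2, p.1 %/ n == a & p.2 %/ n == b]]| == 1.
Proof.
apply/card_set_eq1P; exists (bidx a (M a b).1, bidx b (M a b).2) => -[i j] /=.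
rewrite -(bidx_blk_off i) -(bidx_blk_off j).
move: (bblk i) (boff i) (bblk j) (boff j) => a' c b' d.
rewrite mx_of_blocksE !bidx_div xpair_eqE !eq_bidx.
apply/and3P/andP => [[/eqP Mab /eqP/val_inj eq_a /eqP/val_inj eq_b]|].
  by rewrite eq_a eq_b in Mab *; rewrite Mab !eqxx.
case=> /andP[/eqP-> /eqP->] /andP[/eqP-> /eqP->].
by rewrite -surjective_pairing !eqxx.
Qed.

Lemma mx_of_blocks_Sigma : in_Sigma (mx_of_blocks M).
Proof.
rewrite /in_Sigma mx_of_blocks_perm /=.
by apply/forallP => a; apply/forallP => b; apply: mx_of_blocks_block.
Qed.

End FromPi.

End Blocks.

Theorem lemma2 (n : nat) (hn : 2 <= n) :
  exists f : {A : 'M[bool]_(n * n) | in_Sigma A} ->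
             {M : 'M[('I_n * 'I_n)%type]_n | in_Pi M},
    bijective f.
Proof.
case: n hn => [|k] // _.
exists (fun A => exist _ (blocks_of (val A)) (blocks_of_Pi (valP A))).
exists (fun M => exist _ (mx_of_blocks (val M)) (mx_of_blocks_Sigma (valP M))).
  by move=> [A A_Sigma]; apply/val_inj/blocks_ofK.
by move=> [M M_Pi]; apply/val_inj/mx_of_blocksK.
Qed.
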